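(* Let $\mathcal Q_{round}$ be the set of product measures $\mathrm{Prod}(q)$ with $q\in[0,1]^{\mathbb N}$ such that for every $n\in\mathbb N$, $q_{2n-1}\in\{\tfrac13,\tfrac23\}$ and $q_{2n}=\mathbb 1[q_{2n-1}=\tfrac23]$. Then $\mathcal Q_{round}$ is UME-learnable.
   Context: $\mathrm{Prod}(q)$ is the product measure on $\{0,1\}^{\mathbb N}$ with independent coordinates $X_j\sim\mathrm{Bernoulli}(q_j)$; its mean vector $\mathrm{Mean}(\mathrm{Prod}(q))$ is $q$. A collection $\mathcal Q$ of probability measures on $\{0,1\}^{\mathbb N}$ is UME-learnable if there exist (measurable) estimators $\mathcal A_n:(\{0,1\}^{\mathbb N})^n\to[0,1]^{\mathbb N}$ such that for every $\mu\in\mathcal Q$, $\mathbb E_{S\sim\mu^n}\|\mathcal A_n(S)-\mathrm{Mean}(\mu)\|_\infty\to0$ as $n\to\infty$, where $S$ consists of $n$ i.i.d. draws from $\mu$ and $\mathrm{Mean}(\mu)_j=\mathbb E[X_j]$. *)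

From HB Require Import structures.
From mathcomp Require Import all_boot all_order all_algebra.
From mathcomp Require Import all_classical all_reals all_analysis.
Set Implicit Arguments. Unset Strict Implicit. Unset Printing Implicit Defensive.
Import Order.TTheory GRing.Theory Num.Theory.
Import numFieldNormedType.Exports.
Local Open Scope classical_set_scope.
Local Open Scope ring_scope.

(** Coordinates are indexed by [nat] starting at 0: coordinate [k : nat]
    is the paper's coordinate [k+1]. *)

Definition cantor_gen : set (set (nat -> bool)) :=
  [set [set w | w j = true] | j in [set: nat]].

Definition Cantor : measurableType _ := g_sigma_algebraType cantor_gen.

Definition sample_gen (n : nat) : set (set ('I_n -> Cantor)) :=
  fun E => exists (i : 'I_n) (A : set Cantor),
    measurable A /\ E = [set S | A (S i)].

Definition Sample (n : nat) : measurableType _ :=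
  g_sigma_algebraType (@sample_gen n).

Section defs.
Variable R : realType.

(** [mu] is the product measure [Prod(q)]: it gives every finite cylinder
    its product-of-Bernoulli probability (this determines [mu] uniquely). *)
Definition is_Prod (q : nat -> R) (mu : probability Cantor R) : Prop :=
  forall (s : seq nat) (b : nat -> bool), uniq s ->
    mu [set w : Cantor | forall j, j \in s -> w j = b j] =
    (\prod_(j <- s) (if b j then q j else 1 - q j))%:E.

Definition Mean (mu : probability Cantor R) (j : nat) : R :=
  fine (\int[mu]_w ((w j : bool)%:R : R)%:E)%E.

(** [P] is the law of [n] i.i.d. draws from [mu], i.e. [P = mu^n]
    (rectangles get the product probability; this determines [P]). *)
Definition is_iid_law (n : nat) (mu : probability Cantor R)
    (P : probability (Sample n) R) : Prop :=
  forall A : 'I_n -> set Cantor, (forall i, measurable (A i)) ->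
    P [set S : Sample n | forall i, A i (S i)] = (\prod_i mu (A i))%E.

Definition sup_dist (x y : nat -> R) : \bar R :=
  ereal_sup [set (`|x j - y j|)%:E | j in [set: nat]].

Definition UME_learnable (Q : set (probability Cantor R)) : Prop :=
  exists A : forall n : nat, Sample n -> nat -> R,
    (forall n S j, 0 <= A n S j <= 1) /\
    (forall n j, measurable_fun [set: Sample n] (fun S => A n S j)) /\
    (forall mu, Q mu ->
       forall P : forall n : nat, probability (Sample n) R,
         (forall n, is_iid_law mu (P n)) ->
       ((fun n => (\int[P n]_S sup_dist (A n S) (Mean mu))%E) @ \oo --> 0%E)).

End defs.

(** The class [Q_round] (0-based indexing: the paper's pair
    [(q_{2n-1}, q_{2n})], [n >= 1], is [(q (2k), q (2k+1))], [k >= 0]). *)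
Definition Q_round (R : realType) : set (probability Cantor R) :=
  fun mu => exists q : nat -> R,
    (forall j, 0 <= q j <= 1) /\
    (forall k, (q k.*2 = 1/3 \/ q k.*2 = 2/3) /\
               q k.*2.+1 = (if q k.*2 == 2/3 then 1 else 0)) /\
    is_Prod q mu.

From HB Require Import structures.
From mathcomp Require Import all_boot all_order all_algebra.
From mathcomp Require Import all_classical all_reals all_analysis.
From mathcomp Require Import lra measurable_realfun.
Import Order.TTheory GRing.Theory Num.Theory.
Local Open Scope classical_set_scope.
Local Open Scope ring_scope.

(** In every pair of [Q_round] the second coordinate is deterministic (0 or
    1) and encodes the first one.  A single draw therefore reveals all the
    second coordinates almost surely, and with them the whole mean vector:
    the learner reading off the first draw is exact almost surely, so its
    expected sup-error is 0 as soon as [n >= 1]. *)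

Section integral_null.
Local Open Scope ereal_scope.
Context {d} {T : measurableType d} {R : realType} (mu : {measure set T -> \bar R}).

(* No measurability is needed: both sides are suprema of integrals of simple
   functions below the integrand. *)
Lemma ge0_le_integral_nonmeasurable (f g : T -> \bar R) :
  (forall x, 0 <= f x) -> (forall x, f x <= g x) ->
  \int[mu]_x f x <= \int[mu]_x g x.
Proof.
move=> f0 fg; have g0 x : 0 <= g x by apply: le_trans (fg x).
rewrite !ge0_integralTE//; apply: ereal_sup_le => _ [h /= hf <-].
by exists h => //= x; apply: le_trans (fg x).
Qed.

Lemma ge0_integral_eq0_off_null (N : set T) (f : T -> \bar R) :
  measurable N -> mu N = 0 -> (forall x, 0 <= f x) ->
  (forall x, ~ N x -> f x = 0) -> \int[mu]_x f x = 0.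
Proof.
move=> mN muN0 f0 fN; apply/eqP; rewrite eq_le; apply/andP; split; last first.
  exact: integral_ge0.
have intN : \int[mu]_x ((\1_N x)%:E * +oo) = 0.
  rewrite ge0_integralZr//; last by apply/measurable_EFinP; exact: measurable_indic.
  by rewrite integral_indic// setIT muN0 mul0e.
rewrite -intN; apply: ge0_le_integral_nonmeasurable => // x.
have [Nx|Nx] := pselect (N x); first by rewrite indicE mem_set// mul1e leey.
by rewrite fN.
Qed.

End integral_null.

Section cantor.
Context {R : realType}.

Lemma measurable_coord (j : nat) (P : bool -> Prop) :
  measurable [set w : Cantor | P (w j)].
Proof.
have mj : measurable [set w : Cantor | w j = true].
  by apply: sub_sigma_algebra; exists j.
have [Pt|Pt] := pselect (P true); have [Pf|Pf] := pselect (P false).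
- suff -> : [set w : Cantor | P (w j)] = setT by [].
  by apply/seteqP; split => w //= _; case: (w j).
- suff -> : [set w : Cantor | P (w j)] = [set w | w j = true] by [].
  by apply/seteqP; split => w /=; case: (w j).
- suff -> : [set w : Cantor | P (w j)] = ~` [set w | w j = true].
    exact: measurableC.
  by apply/seteqP; split => w /=; case: (w j).
- suff -> : [set w : Cantor | P (w j)] = set0 by [].
  by apply/seteqP; split => w /=; case: (w j).
Qed.

Lemma measurable_draw {n} (i : 'I_n) {A : set Cantor} :
  measurable A -> measurable [set S : Sample n | A (S i)].
Proof. by move=> mA; apply: sub_sigma_algebra; exists i, A. Qed.

Lemma is_Prod_coord {q : nat -> R} {mu : probability Cantor R} j b :
  is_Prod q mu -> mu [set w | w j = b] = (if b then q j else 1 - q j)%:E.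
Proof.
move=> /(_ [:: j] (fun _ => b) erefl); rewrite big_seq1 => <-.
congr (mu _); apply/seteqP; split => w /= => [wb i|]; last by apply; rewrite inE.
by rewrite inE => /eqP->.
Qed.

Lemma Mean_Prod {q : nat -> R} {mu : probability Cantor R} :
  is_Prod q mu -> Mean mu =1 q.
Proof.
move=> Pq j; rewrite /Mean.
have mj : measurable [set w : Cantor | w j = true].
  exact: (measurable_coord j (eq^~ true)).
rewrite (eq_integral (fun w => (\1_[set w : Cantor | w j = true] w)%:E)).
  rewrite integral_indic// setIT.
  exact: (f_equal fine (is_Prod_coord j true Pq)).
move=> w _; rewrite indicE; case wj: (w j); first by rewrite mem_set.
by rewrite memNset //= wj.
Qed.

Lemma iid_law_first_draw {n} {mu : probability Cantor R}
    {P : probability (Sample n.+1) R} {A : set Cantor} :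
  is_iid_law mu P -> measurable A -> P [set S | A (S ord0)] = mu A.
Proof.
move=> iidP mA; pose B (i : 'I_n.+1) := if i == ord0 then A else setT.
have -> : [set S : Sample n.+1 | A (S ord0)] = [set S | forall i, B i (S i)].
  apply/seteqP; split => S /= => [SA i|/(_ ord0)]; rewrite /B ?eqxx//.
  by case: eqP => [->|].
rewrite iidP => [|i]; last by rewrite /B; case: eqP.
rewrite (bigD1 ord0)//= big1 ?mule1 /B ?eqxx// => i /negbTE ->.
exact: probability_setT.
Qed.

End cantor.

Section sup_dist.
Context {R : realType}.

Lemma sup_dist_ge0 (x y : nat -> R) : (0 <= sup_dist x y)%E.
Proof.
apply: le_trans (ereal_sup_ubound _); last by exists 0%N.
by rewrite lee_fin.
Qed.

Lemma sup_dist_eq0 (x y : nat -> R) : x =1 y -> sup_dist x y = 0%E.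
Proof.
move=> xy; apply/eqP; rewrite eq_le sup_dist_ge0 andbT.
by apply: ge_ereal_sup => _ [j _ <-]; rewrite xy subrr normr0.
Qed.

End sup_dist.

Section round.
Context {R : realType}.

Definition round_pairs (q : nat -> R) : Prop :=
  forall k, (q k.*2 = 1/3 \/ q k.*2 = 2/3) /\
            q k.*2.+1 = (if q k.*2 == 2/3 then 1 else 0).

Definition round_estimate (w : nat -> bool) (j : nat) : R :=
  if odd j then (w j)%:R else if w j.+1 then 2/3 else 1/3.

Definition round_learner (n : nat) : Sample n -> nat -> R :=
  if n is _.+1 then fun S => round_estimate (S ord0) else fun _ _ => 0.

Definition round_mismatch (q : nat -> R) : set Cantor :=
  \bigcup_k [set w | (w k.*2.+1)%:R != q k.*2.+1].

Lemma round_estimate_ge0_le1 w j : 0 <= round_estimate w j <= 1.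
Proof.
by rewrite /round_estimate; case: odd; [case: (w j)|case: (w _)];
  rewrite /= ?lexx ?ler01//; apply/andP; split; lra.
Qed.

Lemma measurable_round_estimate n (i : 'I_n) j :
  measurable_fun [set: Sample n] (fun S => round_estimate (S i) j).
Proof.
move=> _ Y mY; rewrite setTI /round_estimate; case: odd.
- by have := measurable_draw i (measurable_coord j (fun b => Y (b%:R : R))).
- by have := measurable_draw i
    (measurable_coord j.+1 (fun b => Y (if b then 2/3 else 1/3 : R))).
Qed.

Lemma measurable_round_mismatch q : measurable (round_mismatch q).
Proof.
apply: bigcupT_measurable => k.
exact: measurable_coord k.*2.+1 (fun b => b%:R != q k.*2.+1).
Qed.

Lemma round_estimate_exact {q w} :
  round_pairs q -> ~ round_mismatch q w -> round_estimate w =1 q.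
Proof.
move=> qr wq j; have {}wq k : (w k.*2.+1)%:R = q k.*2.+1.
  by apply/eqP/negPn/negP => neq; apply: wq; exists k.
rewrite /round_estimate; have := odd_double_half j; case: odd => /= <-.
  by rewrite add1n wq.
have [q_even q_odd] := qr j./2; move: (wq j./2); rewrite add0n q_odd.
case: (w _); case: eqP => //= q_ne /eqP; rewrite ?oner_eq0 ?(eq_sym 0) ?oner_eq0//.
by case: q_even.
Qed.

Lemma round_mismatch_null q (mu : probability Cantor R) :
  round_pairs q -> is_Prod q mu -> mu (round_mismatch q) = 0%E.
Proof.
move=> qr Pq; apply/negligibleP; first exact: measurable_round_mismatch.
apply: negligible_bigcup => k /=.
have [b qb] : exists b : bool, q k.*2.+1 = b%:R.
  by exists (q k.*2 == 2/3); rewrite (proj2 (qr k)); case: eqP.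
exists [set w | w k.*2.+1 = ~~ b]; split.
- exact: measurable_coord k.*2.+1 (eq^~ (~~ b)).
- by rewrite (is_Prod_coord _ _ Pq) qb; case: b {qb}; rewrite /= ?subrr.
- move=> w /=; rewrite qb; case: (w _); case: b {qb} => //=.
  all: by rewrite eqxx.
Qed.

End round.

Theorem mainTheorem9 (R : realType) : UME_learnable (@Q_round R).
Proof.
exists round_learner; split; [|split].
- by case=> [|n] S j /=; [rewrite lexx ler01|exact: round_estimate_ge0_le1].
- by case=> [|n] j; [exact: measurable_cst|exact: measurable_round_estimate].
move=> mu [q [_ [qr Pq]]] P iidP.
apply: cvg_near_cst; exists 1%N => // -[//|n] _.
have mN := measurable_draw (@ord0 n) (measurable_round_mismatch q).
apply: (ge0_integral_eq0_off_null (P n.+1) _ _ mN).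
- have := iid_law_first_draw (iidP n.+1) (measurable_round_mismatch q).
  by rewrite round_mismatch_null.
- by move=> S; exact: sup_dist_ge0.
- move=> S NS; apply: sup_dist_eq0 => j.
  by rewrite (Mean_Prod Pq) /= (round_estimate_exact qr NS).
Qed.
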